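(* Let $R$ be a Hecke symmetry and let $\int:H_R\to\mathbb{K}$ be a left integral on $H_R$. Then $\int(x)=0$ for every element $x\in H_R$ that is homogeneous of nonzero degree with respect to the $\mathbb{Z}$-grading $\deg z^i_j=1$, $\deg t^i_j=-1$.
   Context: $\mathbb{K}$ is a field of characteristic zero, $q\in\mathbb{K}^\times$ not a root of unity ($q=1$ allowed). $R$ is a Hecke symmetry on $V$ (basis $x_1,\dots,x_d$, $(x_i\otimes x_j)R=\sum x_k\otimes x_lR^{kl}_{ij}$): invertible, satisfying Yang–Baxter, $(R+1)(R-q)=0$, and closed (a matrix $P$ with $\sum R^{il}_{jk}P^{km}_{ln}=\delta^i_n\delta^m_j$ exists). $H_R$ is the Hopf envelope of the bialgebra $E_R$; it is generated by $z^i_j$ and $t^i_j$ ($1\le i,j\le d$) subject to $\sum R^{mn}_{ij}z^k_mz^l_n=\sum z^p_iz^s_jR^{kl}_{ps}$, $\sum_jt^i_jz^j_k=\delta^i_k$, $\sum_jz^i_jt^j_k=\delta^i_k$, with $\Delta(z^j_i)=\sum_k z^j_k\otimes z^k_i$, $\Delta(t^j_i)=\sum_k t^k_i\otimes t^j_k$, antipode $S(z^i_j)=t^i_j$; these relations are homogeneous for the grading $\deg z=1$, $\deg t=-1$. A left integral is a linear functional $\int$ with $\int(x)=\sum x_{(1)}\int(x_{(2)})$ whenever $\Delta(x)=\sum x_{(1)}\otimes x_{(2)}$. *)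

From HB Require Import structures.
From mathcomp Require Import all_boot all_order all_algebra.
Set Implicit Arguments. Unset Strict Implicit. Unset Printing Implicit Defensive.
Import Order.TTheory GRing.Theory Num.Theory.
Local Open Scope ring_scope.

(* Linear operators on a space with finite basis T, given by their     *)
(* coefficients w.r.t. a RIGHT action:  (e_a) A = sum_b A a b e_b.     *)
(* Composition "first A then B".                                       *)
Section Ops.
Variable K : fieldType.

Definition opcomp (T : finType) (A B : T -> T -> K) : T -> T -> K :=
  fun a c => \sum_b A a b * B b c.

Definition opid (T : finType) : T -> T -> K := fun a b => (a == b)%:R.

Variable d : nat.
Notation V2 := ('I_d * 'I_d)%type.
Notation V3 := ('I_d * 'I_d * 'I_d)%type.

(* R (i,j) (k,l) = R^{kl}_{ij}, i.e. (x_i (x) x_j) R = sum x_k (x) x_l R^{kl}_{ij} *)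
Definition R12 (R : V2 -> V2 -> K) : V3 -> V3 -> K :=
  fun a b => R (a.1.1, a.1.2) (b.1.1, b.1.2) * (a.2 == b.2)%:R.
Definition R23 (R : V2 -> V2 -> K) : V3 -> V3 -> K :=
  fun a b => (a.1.1 == b.1.1)%:R * R (a.1.2, a.2) (b.1.2, b.2).

Definition hecke_symmetry (q : K) (R : V2 -> V2 -> K) : Prop :=
  [/\ (exists Ri : V2 -> V2 -> K,
         opcomp R Ri =2 (fun a b => opid a b) /\ opcomp Ri R =2 (fun a b => opid a b)),
      opcomp (opcomp (R12 R) (R23 R)) (R12 R)
        =2 opcomp (opcomp (R23 R) (R12 R)) (R23 R),
      opcomp (fun a b => R a b + opid a b) (fun a b => R a b - q * opid a b)
        =2 (fun _ _ => 0)
    & (* closedness: sum_{k,l} R^{il}_{jk} P^{km}_{ln} = delta^i_n delta^m_j,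
         with P k m l n = P^{km}_{ln} *)
      exists P : 'I_d -> 'I_d -> 'I_d -> 'I_d -> K,
        forall i j m n : 'I_d,
          \sum_(k < d) \sum_(l < d) R (j, k) (i, l) * P k m l n
            = ((i == n) && (m == j))%:R].

(* The free algebra on the generators z^i_j, t^i_j.                    *)
(* A generator is (b, i, j): b = true means z^i_j, b = false t^i_j.    *)
(* Elements of the free algebra are formal finite sums of words,       *)
(* represented by lists of (coefficient, word); two lists represent    *)
(* the same element iff they have the same coefficient function coef.  *)
Definition gen := (bool * 'I_d * 'I_d)%type.
Definition word := seq gen.
Definition fsum := seq (K * word).

Definition zg (i j : 'I_d) : gen := (true, i, j).
Definition tg (i j : 'I_d) : gen := (false, i, j).

Definition coef (p : fsum) (w : word) : K := \sum_(e <- p | e.2 == w) e.1.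

Definition rel_RTT (R : V2 -> V2 -> K) (i j k l : 'I_d) : fsum :=
  [seq (R (i, j) mn, [:: zg k mn.1; zg l mn.2]) | mn <- enum (Finite.clone _ V2)]
  ++ [seq (- R ps (k, l), [:: zg ps.1 i; zg ps.2 j]) | ps <- enum (Finite.clone _ V2)].
Definition rel_tz (i k : 'I_d) : fsum :=
  [seq (1, [:: tg i j; zg j k]) | j <- enum 'I_d] ++ [:: (- (i == k)%:R, [::])].
Definition rel_zt (i k : 'I_d) : fsum :=
  [seq (1, [:: zg i j; tg j k]) | j <- enum 'I_d] ++ [:: (- (i == k)%:R, [::])].

Definition is_rel (R : V2 -> V2 -> K) (r : fsum) : Prop :=
  (exists i j k l, r = rel_RTT R i j k l) \/
  (exists i k, r = rel_tz i k) \/ (exists i k, r = rel_zt i k).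

Definition sandwich (c : K) (u : word) (r : fsum) (v : word) : fsum :=
  [seq (c * e.1, u ++ e.2 ++ v) | e <- r].

(* membership in the two-sided ideal I generated by the relations;
   H_R = free algebra / I *)
Definition in_ideal (R : V2 -> V2 -> K) (p : fsum) : Prop :=
  exists s : seq (K * word * fsum * word),
    (forall e, e \in s -> is_rel R e.1.2) /\
    forall w, coef p w
      = coef (flatten [seq sandwich e.1.1.1 e.1.1.2 e.1.2 e.2 | e <- s]) w.

(* A linear functional on the free algebra is given by its values on words. *)
Definition ev (f : word -> K) (p : fsum) : K := \sum_(e <- p) e.1 * f e.2.

Definition delta_gen (g : gen) : seq (gen * gen) :=
  let: (b, j, i) := g in
  if b then [seq (zg j k, zg k i) | k <- enum 'I_d]
  else [seq (tg k i, tg j k) | k <- enum 'I_d].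

Fixpoint deltaw (w : word) : seq (word * word) :=
  match w with
  | [::] => [:: ([::], [::])]
  | g :: w' => [seq (ab.1 :: uv.1, ab.2 :: uv.2) | ab <- delta_gen g, uv <- deltaw w']
  end.

(* (id (x) f) o Delta *)
Definition id_tensor (f : word -> K) (p : fsum) : fsum :=
  [seq (e.1 * f uv.2, uv.1) | e <- p, uv <- deltaw e.2].

(* f is a linear functional on H_R (vanishes on I) which is a left integral:
   sum x_(1) f(x_(2)) = f(x) 1 in H_R for every x. *)
Definition left_integral (R : V2 -> V2 -> K) (f : word -> K) : Prop :=
  (forall p, in_ideal R p -> ev f p = 0) /\
  (forall p, in_ideal R (id_tensor f p ++ [:: (- ev f p, [::])])).

Definition deg (w : word) : int := \sum_(g <- w) (if g.1.1 then 1 else -1).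

Definition homogeneous (n : int) (p : fsum) : Prop :=
  forall e, e \in p -> deg e.2 = n.

End Ops.

From mathcomp Require Import all_boot all_order all_algebra.
From mathcomp Require Import ring.
Import GRing.Theory.

(** The counit of H_R (z^i_j, t^i_j |-> delta_ij) is multiplicative
    and kills the defining relations, which are homogeneous; hence its
    degree-0 part [counit_deg0] vanishes on the relation ideal as well, i.e.
    it is a functional on H_R.  Apply it to the integral identity
    sum x_(1) int(x_(2)) = int(x) 1 for x homogeneous of degree n <> 0:
    the coproduct gives every left factor x_(1) degree n, so the left side
    is killed, while [counit_deg0] 1 = 1.  (The counit itself would only
    give the tautology int(x) = int(x).) *)

Set Implicit Arguments.
Unset Strict Implicit.
Unset Printing Implicit Defensive.
Local Open Scope ring_scope.

Lemma sum_enum_delta (S : pzSemiRingType) (T : finType) (a : T) (F : T -> S) :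
  \sum_(x <- enum T) F x * (x == a)%:R = F a.
Proof.
rewrite big_enum (bigD1 a) //= eqxx mulr1 big1 ?addr0 // => x /negPf ->.
exact: mulr0.
Qed.

Lemma natr_pair_eq (S : pzSemiRingType) (T1 T2 : eqType) (a b : T1 * T2) :
  (a.1 == b.1)%:R * (a.2 == b.2)%:R = (a == b)%:R :> S.
Proof. by rewrite -natrM mulnb. Qed.

Section FreeAlgebra.
Variables (K : fieldType) (d : nat).
Implicit Types (f : word d -> K) (p r : fsum K d) (u v w : word d).

Lemma ev_cat f p r : ev f (p ++ r) = ev f p + ev f r.
Proof. by rewrite /ev big_cat. Qed.

Lemma ev_coef f p (s : seq (word d)) :
  uniq s -> {subset map snd p <= s} -> ev f p = \sum_(w <- s) coef p w * f w.
Proof.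
move=> s_uniq p_s; under [RHS]eq_bigr do rewrite /coef big_distrl.
rewrite /= (exchange_big_dep xpredT) //=; apply: eq_big_seq => e e_p.
rewrite (eq_bigl (pred1 e.2)) => [|w]; last exact: eq_sym.
by rewrite -big_filter filter_pred1_uniq ?big_seq1 // p_s ?map_f.
Qed.

Lemma ev_eq_coef f p r : coef p =1 coef r -> ev f p = ev f r.
Proof.
move=> eq_pr; set s := undup (map snd (p ++ r)).
rewrite (@ev_coef _ _ s) ?(@ev_coef _ r s) ?undup_uniq //.
- by apply: eq_bigr => w _; rewrite eq_pr.
all: by move=> w w_pr; rewrite mem_undup map_cat mem_cat w_pr ?orbT.
Qed.

Lemma ev_map f (T : Type) (F : T -> K * word d) (s : seq T) :
  ev f (map F s) = \sum_(x <- s) (F x).1 * f (F x).2.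
Proof. by rewrite /ev big_map. Qed.

Lemma ev_seq1 f (c : K) w : ev f [:: (c, w)] = c * f w.
Proof. by rewrite /ev big_seq1. Qed.

Lemma ev_flatten f (ps : seq (fsum K d)) :
  ev f (flatten ps) = \sum_(p <- ps) ev f p.
Proof. by rewrite /ev big_flatten. Qed.

Lemma deg_cons (g : gen d) w : deg (g :: w) = (if g.1.1 then 1 else -1) + deg w.
Proof. by rewrite /deg big_cons. Qed.

Lemma deg_cat u v : deg (u ++ v) = deg u + deg v.
Proof. by rewrite /deg big_cat. Qed.

Lemma deg_deltaw_fst w uv : uv \in deltaw w -> deg uv.1 = deg w.
Proof.
elim: w uv => [|g w IHw] uv /=; first by rewrite inE => /eqP ->.
case/allpairsPdep => ab [uv' [ab_g uv'_w ->]] /=.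
rewrite !deg_cons (IHw _ uv'_w); congr (_ + _).
by case: g ab_g => [[[] j] i] /mapP [k _ ->].
Qed.

Lemma homogeneous_id_tensor f (n : int) p :
  homogeneous n p -> homogeneous n (id_tensor f p).
Proof.
move=> p_hom _ /allpairsPdep [e [uv [e_p uv_e ->]]] /=.
by rewrite (deg_deltaw_fst uv_e) p_hom.
Qed.

End FreeAlgebra.

Section Counit.
Variables (K : fieldType) (d : nat) (R : 'I_d * 'I_d -> 'I_d * 'I_d -> K).
Implicit Types (p r : fsum K d) (u v w : word d).

Definition counit w : K := \prod_(g <- w) (g.1.2 == g.2)%:R.

Definition counit_deg0 w : K := if deg w == 0 then counit w else 0.

Lemma counit_nil : counit [::] = 1.
Proof. by rewrite /counit big_nil. Qed.

Lemma counit_deg0_nil : counit_deg0 [::] = 1.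
Proof. by rewrite /counit_deg0 /deg big_nil eqxx counit_nil. Qed.

Lemma counit_cat u v : counit (u ++ v) = counit u * counit v.
Proof. by rewrite /counit big_cat. Qed.

Lemma counit_pair (g h : gen d) :
  counit [:: g; h] = (g.1.2 == g.2)%:R * (h.1.2 == h.2)%:R.
Proof. by rewrite /counit !big_cons big_nil mulr1. Qed.

Lemma counit_deg0_sandwich (c : K) u r v (n : int) :
  homogeneous n r -> ev counit r = 0 -> ev counit_deg0 (sandwich c u r v) = 0.
Proof.
move=> r_hom r_counit; rewrite /ev /sandwich big_map.
have -> : \sum_(e <- r) c * e.1 * counit_deg0 (u ++ e.2 ++ v)
    = c * counit u * counit v * (deg u + n + deg v == 0)%:R * ev counit r.
  rewrite /ev mulr_sumr big_seq [RHS]big_seq; apply: eq_bigr => e e_r.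
  rewrite /counit_deg0 !deg_cat !counit_cat r_hom // addrA.
  by case: eqP => _ /=; rewrite ?mulr0 ?mul0r //; ring.
by rewrite r_counit mulr0.
Qed.

Lemma counit_deg0_homogeneous (n : int) p :
  n != 0 -> homogeneous n p -> ev counit_deg0 p = 0.
Proof.
move=> n_neq0 p_hom; rewrite /ev big_seq big1 // => e e_p.
by rewrite /counit_deg0 p_hom // (negPf n_neq0) mulr0.
Qed.

Lemma counit_RTT i j k l : ev counit (rel_RTT R i j k l) = 0.
Proof.
rewrite /rel_RTT ev_cat !ev_map.
under eq_bigr => mn _ do rewrite counit_pair /= (natr_pair_eq _ (k, l)) eq_sym.
under [X in _ + X]eq_bigr => ps _ do
  rewrite counit_pair /= (natr_pair_eq _ _ (i, j)).
by rewrite !sum_enum_delta addrN.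
Qed.

Lemma counit_tz i k : ev counit (rel_tz K i k) = 0.
Proof.
rewrite /rel_tz ev_cat ev_map.
under eq_bigr => j _ do rewrite counit_pair /= mul1r.
by rewrite sum_enum_delta ev_seq1 counit_nil mulr1 addrN.
Qed.

Lemma counit_zt i k : ev counit (rel_zt K i k) = 0.
Proof.
rewrite /rel_zt ev_cat ev_map.
under eq_bigr => j _ do rewrite counit_pair /= mul1r.
by rewrite sum_enum_delta ev_seq1 counit_nil mulr1 addrN.
Qed.

Lemma counit_rel r : is_rel R r -> ev counit r = 0.
Proof.
by case=> [[i [j [k [l ->]]]]|[[i [k ->]]|[i [k ->]]]];
  rewrite ?counit_RTT ?counit_tz ?counit_zt.
Qed.

Lemma rel_homogeneous r : is_rel R r -> exists n, homogeneous n r.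
Proof.
case=> [[i [j [k [l ->]]]]|[[i [k ->]]|[i [k ->]]]].
- by exists 2 => e; rewrite mem_cat => /orP [] /mapP [x _ ->];
    rewrite /deg !big_cons big_nil.
- by exists 0 => e; rewrite mem_cat inE => /orP [/mapP [x _ ->]|/eqP ->];
    rewrite /deg ?big_cons big_nil.
- by exists 0 => e; rewrite mem_cat inE => /orP [/mapP [x _ ->]|/eqP ->];
    rewrite /deg ?big_cons big_nil.
Qed.

Lemma counit_deg0_ideal p : in_ideal R p -> ev counit_deg0 p = 0.
Proof.
case=> s [s_rel coef_p].
rewrite (ev_eq_coef _ coef_p) ev_flatten big_map big_seq.
apply: big1 => e e_s; have [n r_hom] := rel_homogeneous (s_rel e e_s).
exact: counit_deg0_sandwich r_hom (counit_rel (s_rel e e_s)).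
Qed.

End Counit.

Theorem lemma4p1 (K : fieldType) (d : nat) (q : K)
    (R : 'I_d * 'I_d -> 'I_d * 'I_d -> K) :
  [pchar K] =i pred0 ->
  q != 0 ->
  (q = 1 \/ forall n : nat, (0 < n)%N -> q ^+ n != 1) ->
  hecke_symmetry q R ->
  forall f : word d -> K, left_integral R f ->
  forall (n : int) (p : fsum K d), n != 0 -> homogeneous n p -> ev f p = 0.
Proof.
move=> _ _ _ _ f [_ f_integral] n p n_neq0 p_hom.
have := counit_deg0_ideal (f_integral p).
rewrite ev_cat (counit_deg0_homogeneous n_neq0 (homogeneous_id_tensor p_hom)).
rewrite add0r ev_seq1 counit_deg0_nil mulr1 => /eqP.
by rewrite oppr_eq0 => /eqP.
Qed.
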